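(* Let $p\ge2$ be an even integer and let $\mu\in P_p(\mathbb{R}^d)$ be a probabilistic $p$-frame for $\mathbb{R}^d$. Then $$PFP_p(\mu)\ \ge\ \frac{(p-1)(p-3)\cdots1}{(d+p-2)(d+p-4)\cdots d}\Big(\int_{\mathbb{R}^d}\|x\|^p\,d\mu(x)\Big)^2,$$ with equality if and only if $\mu$ is a tight probabilistic $p$-frame.
   Context: $P_p(\mathbb{R}^d)$ is the set of Borel probability measures on $\mathbb{R}^d$ with finite $p$-th moment. $PFP_p(\mu)=\iint|\langle x,y\rangle|^p\,d\mu(x)\,d\mu(y)$. A probability measure $\mu$ is a probabilistic $p$-frame if there exist $0<A\le B<\infty$ with $A\|y\|^p\le\int|\langle x,y\rangle|^p\,d\mu(x)\le B\|y\|^p$ for all $y\in\mathbb{R}^d$; it is a tight probabilistic $p$-frame if this holds with $A=B$. *)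

(* with MathComp-Analysis.  R^d is modelled as d.-tuple R,
   equipped with the library's product sigma-algebra (= Borel sets of R^d). *)
From HB Require Import structures.
From mathcomp Require Import all_boot all_order all_algebra.
From mathcomp Require Import all_classical all_reals all_analysis.
Set Implicit Arguments. Unset Strict Implicit. Unset Printing Implicit Defensive.
Import Order.TTheory GRing.Theory Num.Theory.
Local Open Scope ring_scope.
Local Open Scope classical_set_scope.

Section defs.
Variables (R : realType) (d : nat).

Definition dotp (x y : d.-tuple R) : R := \sum_(i < d) tnth x i * tnth y i.
Definition enorm (x : d.-tuple R) : R := Num.sqrt (dotp x x).

Definition finite_pmoment (p : nat) (mu : probability (d.-tuple R) R) : Prop :=
  mu.-integrable setT (fun x => ((enorm x) ^+ p)%:E).

Definition frame_int (p : nat) (mu : probability (d.-tuple R) R) (y : d.-tuple R)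
  : \bar R := (\int[mu]_x (`|dotp x y| ^+ p)%:E)%E.

Definition prob_pframe (p : nat) (mu : probability (d.-tuple R) R) : Prop :=
  exists A B : R, 0 < A /\ A <= B /\
    forall y : d.-tuple R,
      ((A * (enorm y) ^+ p)%:E <= frame_int p mu y)%E /\
      (frame_int p mu y <= (B * (enorm y) ^+ p)%:E)%E.

Definition tight_prob_pframe (p : nat) (mu : probability (d.-tuple R) R) : Prop :=
  exists A : R, 0 < A /\
    forall y : d.-tuple R, frame_int p mu y = (A * (enorm y) ^+ p)%:E.

Definition PFP (p : nat) (mu : probability (d.-tuple R) R) : \bar R :=
  (\int[mu]_y frame_int p mu y)%E.

Definition pmoment (p : nat) (mu : probability (d.-tuple R) R) : \bar R :=
  (\int[mu]_x ((enorm x) ^+ p)%:E)%E.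

(* for p = 2m: ((p-1)(p-3)...1) / ((d+p-2)(d+p-4)...d)
   = \prod_(k < m) (2k+1) / \prod_(k < m) (d+2k) *)
Definition frame_const (p : nat) : R :=
  (\prod_(k < p./2) (k.*2.+1)%:R) / (\prod_(k < p./2) (d + k.*2)%:R).

End defs.

(* Expanding |<x,y>|^p = <x,y>^p over index tuples t in 'I_d^p gives
   frame_int(y) = \sum_t T_t y^t and PFP = \sum_t T_t^2, where T_t = \int x^t dmu
   is the p-th moment tensor of mu.  Let W_t = E[g^t] be the moment tensor of a
   standard Gaussian vector g in R^d.  Wick's formula gives
   \sum_t W_t y^t = (p-1)!! ||y||^p, hence \int ||x||^p dmu = <W, T> / (p-1)!!, and
   <W, W> = (p-1)!! d(d+2)...(d+p-2).  The inequality is Cauchy-Schwarz for <W, T>;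
   equality holds iff T is proportional to W, i.e. iff frame_int(y) is a multiple
   of ||y||^p.  For the converse, a symmetric tensor is determined by the
   homogeneous polynomial it defines (polarization); the lower frame bound makes
   the constant positive. *)
From HB Require Import structures.
From mathcomp Require Import all_boot all_order all_algebra.
From mathcomp Require Import all_classical all_reals all_analysis.
From mathcomp Require Import fingroup perm measurable_realfun ring.
Set Implicit Arguments. Unset Strict Implicit. Unset Printing Implicit Defensive.
Import Order.TTheory GRing.Theory Num.Theory.
Local Open Scope ring_scope.

Definition perm_invariant (T : eqType) (U : Type) (S : seq T -> U) :=
  forall s1 s2, perm_eq s1 s2 -> S s1 = S s2.

Lemma tuple_perm_eq (T : eqType) n (s : 'S_n) (t : n.-tuple T) :
  perm_eq [tuple tnth t (s j) | j < n] t.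
Proof. by apply/tuple_permP; exists s. Qed.

Lemma perm_eq_tuple_surj (T : eqType) n (g : {ffun 'I_n -> 'I_n}) (i0 : n.-tuple T) :
  [forall q, q \in codom g] -> perm_eq [tuple tnth i0 (g j) | j < n] i0.
Proof.
move=> /forallP g_surj.
have g_enum : enum 'I_n =i map g (enum 'I_n).
  by move=> q; rewrite mem_enum -codomE g_surj.
have g_uniq : uniq (map g (enum 'I_n)).
  by rewrite (uniq_size_uniq (enum_uniq _) g_enum) size_map.
have g_perm : perm_eq (map g (enum 'I_n)) (enum 'I_n).
  by apply: (uniq_perm g_uniq (enum_uniq _)) => q; rewrite g_enum.
have -> : val [tuple tnth i0 (g j) | j < n] = map (tnth i0) (map g (enum 'I_n)).
  by rewrite /= -map_comp.
by rewrite -[X in perm_eq _ X]map_tnth_enum; apply: perm_map.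
Qed.

Lemma prodr_nat_bool (R : comPzSemiRingType) (T : finType) (P : pred T) :
  \prod_(i : T) (P i)%:R = ([forall i, P i])%:R :> R.
Proof.
case: (boolP [forall i, P i]) => [/forallP H | /forallPn [i Hi]].
  by rewrite big1 // => i _; rewrite H.
by rewrite (bigD1 i) //= (negbTE Hi) mul0r.
Qed.

Lemma prod_eq_tnth (R : comPzSemiRingType) (T : eqType) n (t u : n.-tuple T) :
  \prod_(j < n) (tnth u j == tnth t j)%:R = (t == u)%:R :> R.
Proof.
rewrite prodr_nat_bool; congr ((_ : bool)%:R); apply/forallP/eqP => [H|->] //.
by apply: eq_from_tnth => j; apply/esym/eqP/H.
Qed.

Section TupleSums.
Variables (V : nmodType) (I : finType).

Lemma sum_tuple0 (F : 0.-tuple I -> V) : \sum_(t : 0.-tuple I) F t = F [tuple].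
Proof. by rewrite (big_pred1 [tuple]) // => t; symmetry; apply/eqP; apply: tuple0. Qed.

Lemma sum_tuple_cons n (F : n.+1.-tuple I -> V) :
  \sum_(t : n.+1.-tuple I) F t = \sum_(a : I) \sum_(t : n.-tuple I) F [tuple of a :: t].
Proof.
rewrite pair_big /= (reindex (fun u : I * n.-tuple I => [tuple of u.1 :: u.2])) //=.
exists (fun t : n.+1.-tuple I => (thead t, [tuple of behead t])).
- by case=> a t _ /=; congr pair; apply: val_inj.
- by move=> t _; rewrite [in RHS](tuple_eta t).
Qed.

Lemma sum_tuple_permute n (s : 'S_n) (F : n.-tuple I -> V) :
  \sum_(t : n.-tuple I) F t = \sum_(t : n.-tuple I) F [tuple tnth t (s j) | j < n].
Proof.
rewrite (reindex (fun t : n.-tuple I => [tuple tnth t (s j) | j < n])) //.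
exists (fun t : n.-tuple I => [tuple tnth t ((s^-1)%g j) | j < n]) => t _;
  apply: eq_from_tnth => j; rewrite !tnth_map !tnth_ord_tuple ?permKV ?permK //.
Qed.

End TupleSums.

Section TupleSemiring.
Variables (R : pzSemiRingType) (I : finType).

Lemma exprn_sum_tuple n (a : I -> R) :
  (\sum_l a l) ^+ n = \sum_(t : n.-tuple I) \prod_(l <- t) a l.
Proof.
elim: n => [|n IH]; first by rewrite expr0 sum_tuple0 big_nil.
rewrite exprS IH mulr_suml sum_tuple_cons; apply: eq_bigr => l _.
by rewrite mulr_sumr; apply: eq_bigr => t _; rewrite big_cons.
Qed.

Lemma count_mem_tnth n a (t : n.-tuple I) :
  (count_mem a t)%:R = \sum_(j < n) (tnth t j == a)%:R :> R.
Proof.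
rewrite -sum1_count big_tuple natr_sum /= big_mkcond.
by apply: eq_bigr => j _; case: (_ == _).
Qed.

Lemma sum_count_mem (s : seq I) : \sum_(a : I) (count_mem a s)%:R = (size s)%:R :> R.
Proof.
elim: s => [|x s IH]; first by rewrite big1.
rewrite /= (eq_bigr (fun a => (x == a)%:R + (count_mem a s)%:R)); last first.
  by move=> a _; rewrite natrD.
rewrite big_split /= IH (bigD1 x) //= eqxx big1 ?addr0; last first.
  by move=> a; rewrite eq_sym => /negbTE ->.
by rewrite -add1n natrD.
Qed.

End TupleSemiring.

Section GaussianMoments.
Variables (R : comNzRingType) (d : nat).
Local Notation I := 'I_d.

(* [oddfact m] is (2m-1)!!, and [gauss_moment c] is E[g^c] for g ~ N(0,1). *)
Definition oddfact m : R := \prod_(j < m) (j.*2.+1)%:R.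
Definition gauss_moment c : R := if odd c then 0 else oddfact c./2.

Lemma gauss_momentS c : gauss_moment c.+1 = c%:R * gauss_moment c.-1.
Proof.
case: c => [|c]; first by rewrite /gauss_moment /= mul0r.
rewrite /gauss_moment /= negbK; case: ifP => oc; first by rewrite mulr0.
rewrite /oddfact big_ord_recr /= mulrC; congr (_ * _).
by rewrite -[in RHS](odd_double_half c) oc add0n.
Qed.

(* E[\prod_(l <- s) g_l] for a standard Gaussian vector g of R^d. *)
Definition gmoment (s : seq I) : R := \prod_(l < d) gauss_moment (count_mem l s).

Lemma gmoment_nil : gmoment [::] = 1.
Proof. by rewrite /gmoment big1 // => l _; rewrite /gauss_moment /oddfact big_ord0. Qed.

Lemma gmoment_perm : perm_invariant gmoment.
Proof. by move=> s1 s2 /seq.permP H; apply: eq_bigr => l _; rewrite H. Qed.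

Lemma gmoment_rem_perm a : perm_invariant (fun s => gmoment (rem a s)).
Proof.
by move=> s1 s2 /seq.permP H; apply: eq_bigr => l _; rewrite !count_mem_rem H.
Qed.

(* Stein's identity E[g_a F(g)] = E[d_a F(g)] for a monomial F. *)
Lemma gmoment_cons a s : gmoment (a :: s) = (count_mem a s)%:R * gmoment (rem a s).
Proof.
rewrite /gmoment (bigD1 a) //= [in RHS](bigD1 a) //= eqxx add1n gauss_momentS.
rewrite count_mem_rem eqxx subn1 -mulrA; congr (_ * (_ * _)).
by apply: eq_bigr => l la; rewrite count_mem_rem eq_sym (negbTE la) subn0.
Qed.

Lemma gmoment_cons2 a s : gmoment [:: a, a & s] = (count_mem a s).+1%:R * gmoment s.
Proof. by rewrite gmoment_cons /= !eqxx. Qed.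

Lemma wick_step n (S : seq I -> R) : perm_invariant S ->
  \sum_(t : n.+2.-tuple I) gmoment t * S t =
  n.+1%:R * \sum_(t : n.-tuple I) gmoment t * \sum_(a : I) S [:: a, a & t].
Proof.
move=> S_perm.
have first_index a : \sum_(t : n.+1.-tuple I) gmoment (a :: t) * S (a :: t) =
    n.+1%:R * \sum_(t : n.-tuple I) gmoment t * S [:: a, a & t].
  under eq_bigr => t _ do rewrite gmoment_cons count_mem_tnth !mulr_suml.
  rewrite exchange_big /=.
  have move_to_front (j : 'I_n.+1) :
      \sum_(t : n.+1.-tuple I) (tnth t j == a)%:R * gmoment (rem a t) * S (a :: t)
    = \sum_(t : n.+1.-tuple I) (tnth t ord0 == a)%:R * gmoment (rem a t) * S (a :: t).
    rewrite [RHS](sum_tuple_permute (tperm ord0 j)); apply: eq_bigr => t _.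
    rewrite tnth_map tnth_ord_tuple tpermL; congr (_ * _ * _).
      by apply: gmoment_rem_perm; rewrite perm_sym tuple_perm_eq.
    by apply: S_perm; rewrite perm_cons perm_sym tuple_perm_eq.
  rewrite (eq_bigr _ (fun j _ => move_to_front j)) sumr_const card_ord mulr_natl.
  congr (_ *+ _); rewrite sum_tuple_cons (bigD1 a) //= [X in _ + X]big1 ?addr0.
    by apply: eq_bigr => t _; rewrite tnth0 eqxx mul1r /= ?eqxx.
  by move=> b ba; apply: big1 => t _; rewrite tnth0 (negbTE ba) !mul0r.
rewrite sum_tuple_cons (eq_bigr _ (fun a _ => first_index a)) -mulr_sumr.
by congr (_ * _); rewrite exchange_big /=; apply: eq_bigr => t _; rewrite mulr_sumr.
Qed.

Fixpoint stutter (s : seq I) : seq I :=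
  if s is a :: s' then [:: a, a & stutter s'] else [::].

Lemma size_stutter s : size (stutter s) = (size s).*2.
Proof. by elim: s => //= a s ->. Qed.

(* Isserlis-Wick: the (2m-1)!! pairings of 2m Gaussian factors. *)
Lemma wick m (S : seq I -> R) : perm_invariant S ->
  \sum_(t : (m.*2).-tuple I) gmoment t * S t =
  oddfact m * \sum_(k : m.-tuple I) S (stutter k).
Proof.
elim: m S => [|m IH] S S_perm.
  by rewrite !sum_tuple0 /oddfact big_ord0 gmoment_nil !mul1r.
rewrite doubleS wick_step // (IH (fun s => \sum_(a : I) S [:: a, a & s])); last first.
  by move=> s1 s2 H; apply: eq_bigr => a _; apply: S_perm; rewrite !perm_cons.
rewrite /oddfact big_ord_recr /= sum_tuple_cons exchange_big /=.
by rewrite mulrA [_ * (_ %:R)]mulrC.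
Qed.

(* E[||g||^(2m)] = d (d+2) ... (d+2m-2), the m-th moment of a chi^2_d law. *)
Definition chi2_moment m : R := \prod_(j < m) (d + j.*2)%:R.

Lemma sum_gmoment_stutter m : \sum_(k : m.-tuple I) gmoment (stutter k) = chi2_moment m.
Proof.
elim: m => [|m IH]; first by rewrite sum_tuple0 /chi2_moment big_ord0 gmoment_nil.
rewrite sum_tuple_cons exchange_big /= /chi2_moment big_ord_recr /= -/(chi2_moment m).
rewrite -IH mulr_suml; apply: eq_bigr => k _.
under eq_bigr do rewrite gmoment_cons2.
rewrite -mulr_suml mulrC; congr (_ * _).
under eq_bigr do rewrite -addn1 natrD.
rewrite big_split /= sum_count_mem size_stutter size_tuple sumr_const card_ord.
by rewrite -natrD addnC.
Qed.

End GaussianMoments.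

Definition monomial (R : pzSemiRingType) d (s : seq 'I_d) (y : d.-tuple R) : R :=
  \prod_(l <- s) tnth y l.

Lemma monomial_perm (R : comPzSemiRingType) d (y : d.-tuple R) :
  perm_invariant (fun s => monomial s y).
Proof. by move=> s1 s2 H; apply: perm_big. Qed.

Section Polarization.
Variables (R : numDomainType) (d : nat).
Local Notation I := 'I_d.

Definition sign_weight n (e : {ffun 'I_n -> bool}) : R :=
  \prod_(q < n) (if e q then 1 else -1).

Definition polar_point n (i0 : n.-tuple I) (e : {ffun 'I_n -> bool}) : d.-tuple R :=
  [tuple \sum_(q < n) ((e q) && (tnth i0 q == l))%:R | l < d].

(* Inclusion-exclusion: the signed sum only survives for surjective g. *)
Lemma sum_sign_weight n (g : {ffun 'I_n -> 'I_n}) :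
  \sum_(e : {ffun 'I_n -> bool}) sign_weight e * \prod_(j < n) (e (g j))%:R
  = ([forall q, q \in codom g])%:R.
Proof.
have factor e : sign_weight e * \prod_(j < n) (e (g j))%:R =
   \prod_(q < n) ((if e q then 1 else -1) * ((q \in codom g) ==> e q)%:R).
  rewrite big_split /= prodr_nat_bool prodr_nat_bool; congr (_ * _%:R).
  congr (nat_of_bool _); apply/idP/idP => /forallP H; apply/forallP => q.
   - by apply/implyP => /codomP [j ->]; exact: H.
   - exact: (implyP (H (g q)) (codom_f g q)).
rewrite (eq_bigr _ (fun e _ => factor e)).
rewrite -(bigA_distr_bigA (fun q b => (if b then 1 else -1) * ((q \in codom g) ==> b)%:R)).
rewrite -prodr_nat_bool; apply: eq_bigr => q _; rewrite big_bool /=.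
by case: (q \in codom g) => /=; rewrite ?mul1r ?mulr1 ?mulr0 ?addr0 // addrN.
Qed.

Lemma monomial_polar_point n (i0 t : n.-tuple I) e :
  monomial t (polar_point i0 e) = \sum_(g : {ffun 'I_n -> 'I_n})
    (\prod_(j < n) (e (g j))%:R) * (t == [tuple tnth i0 (g j) | j < n])%:R.
Proof.
rewrite /monomial big_tuple (eq_bigr (fun j =>
    \sum_(q < n) ((e q)%:R * (tnth i0 q == tnth t j)%:R))); last first.
  move=> j _; rewrite tnth_map tnth_ord_tuple; apply: eq_bigr => q _.
  by rewrite -natrM mulnb.
rewrite bigA_distr_bigA /=; apply: eq_bigr => g _; rewrite big_split /= -prod_eq_tnth.
by congr (_ * _); apply: eq_bigr => j _; rewrite tnth_map tnth_ord_tuple.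
Qed.

Lemma polarization n (U : seq I -> R) (i0 : n.-tuple I) : perm_invariant U ->
  \sum_(e : {ffun 'I_n -> bool}) sign_weight e *
    \sum_(t : n.-tuple I) U t * monomial t (polar_point i0 e) =
  (\sum_(g : {ffun 'I_n -> 'I_n}) ([forall q, q \in codom g])%:R) * U i0.
Proof.
move=> U_perm.
transitivity (\sum_(g : {ffun 'I_n -> 'I_n})
    (\sum_(t : n.-tuple I) U t * (t == [tuple tnth i0 (g j) | j < n])%:R) *
    \sum_(e : {ffun 'I_n -> bool}) sign_weight e * \prod_(j < n) (e (g j))%:R).
  under eq_bigr => e _ do under eq_bigr => t _ do
    rewrite monomial_polar_point mulr_sumr.
  under eq_bigr => e _ do rewrite exchange_big mulr_sumr.
  rewrite exchange_big /=; apply: eq_bigr => g _.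
  rewrite mulrC mulr_suml; apply: eq_bigr => e _; rewrite !mulr_sumr.
  by apply: eq_bigr => t _; ring.
rewrite mulr_suml; apply: eq_bigr => g _.
rewrite sum_sign_weight (bigD1 [tuple tnth i0 (g j) | j < n]) //= eqxx mulr1.
rewrite big1 ?addr0; last by move=> t /negbTE ->; rewrite mulr0.
case: (boolP [forall q, q \in codom g]) => g_surj; last by rewrite !mulr0 mul0r.
by rewrite mulr1 mul1r; apply: U_perm; apply: perm_eq_tuple_surj.
Qed.

Lemma perm_invariant_coef_eq0 n (U : seq I -> R) : perm_invariant U ->
  (forall y : d.-tuple R, \sum_(t : n.-tuple I) U t * monomial t y = 0) ->
  forall t : n.-tuple I, U t = 0.
Proof.
move=> U_perm U0 t; have := polarization t U_perm.
rewrite big1; last by move=> e _; rewrite U0 mulr0.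
move/esym/eqP; rewrite mulf_eq0 => /orP [|/eqP //].
rewrite (bigD1 [ffun j => j]) //=.
have -> : [forall q, q \in codom [ffun j : 'I_n => j]].
  by apply/forallP => q; apply/codomP; exists q; rewrite ffunE.
rewrite paddr_eq0 ?ler01 ?sumr_ge0 ?oner_eq0 // => i _; exact: ler0n.
Qed.

End Polarization.

Section CauchySchwarz.
Variables (R : realFieldType) (X : finType) (u v : X -> R).
Let A := \sum_x u x * u x.
Let B := \sum_x u x * v x.
Let C := \sum_x v x * v x.
Hypothesis A_gt0 : 0 < A.

Let sum_sqr_residual : \sum_x (A * v x - B * u x) ^+ 2 = A * (A * C - B * B).
Proof.
rewrite (eq_bigr (fun x => A * A * (v x * v x) - (A * B *+ 2) * (u x * v x)
   + B * B * (u x * u x))); last by move=> x _; ring.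
by rewrite big_split big_split /= sumrN -!mulr_sumr -/A -/B -/C; ring.
Qed.

Lemma cauchy_schwarz_sum : B * B <= A * C.
Proof.
rewrite -subr_ge0 -(pmulr_rge0 _ A_gt0) -sum_sqr_residual.
by apply: sumr_ge0 => x _; apply: sqr_ge0.
Qed.

Lemma cauchy_schwarz_sum_eq : B * B = A * C -> forall x, v x = B / A * u x.
Proof.
move=> BC x.
have := @psumr_eq0P _ _ xpredT (fun x => (A * v x - B * u x) ^+ 2) (fun x _ => sqr_ge0 _).
rewrite sum_sqr_residual BC subrr mulr0 => /(_ erefl x isT) /eqP.
rewrite sqrf_eq0 subr_eq0 => /eqP Avx.
by rewrite -mulrA mulrCA -Avx mulrA mulVf ?mul1r // gt_eqF.
Qed.

End CauchySchwarz.

Section EuclideanMonomials.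
Variables (R : realType) (d : nat).
Local Notation I := 'I_d.

Lemma dotp_exprn n (x y : d.-tuple R) :
  dotp x y ^+ n = \sum_(t : n.-tuple I) monomial t x * monomial t y.
Proof.
rewrite /dotp exprn_sum_tuple; apply: eq_bigr => t _.
by rewrite /monomial -big_split.
Qed.

Lemma enorm_exprn_double m (x : d.-tuple R) : enorm x ^+ (m.*2) = dotp x x ^+ m.
Proof.
rewrite -mul2n exprM sqr_sqrtr // /dotp.
by apply: sumr_ge0 => l _; rewrite -expr2 sqr_ge0.
Qed.

Lemma monomial_stutter (k : seq I) (y : d.-tuple R) :
  monomial (stutter k) y = \prod_(l <- k) (tnth y l * tnth y l).
Proof.
by elim: k => [|a k IH]; rewrite /monomial /= ?big_nil // !big_cons -IH mulrA.
Qed.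

Lemma sum_gmoment_monomial m (y : d.-tuple R) :
  \sum_(t : (m.*2).-tuple I) gmoment R t * monomial t y =
  oddfact R m * enorm y ^+ (m.*2).
Proof.
rewrite (@wick R d m (fun s => monomial s y)); last exact: monomial_perm.
rewrite enorm_exprn_double /dotp exprn_sum_tuple; congr (_ * _).
by apply: eq_bigr => k _; apply: monomial_stutter.
Qed.

Lemma sum_gmoment_sqr m :
  \sum_(t : (m.*2).-tuple I) gmoment R t * gmoment R t = oddfact R m * chi2_moment R d m.
Proof. by rewrite (@wick R d m (@gmoment R d)) ?sum_gmoment_stutter //; apply: gmoment_perm. Qed.

Lemma oddfact_gt0 m : 0 < oddfact R m.
Proof. by apply: prodr_gt0 => j _; rewrite ltr0n. Qed.

Lemma chi2_moment_gt0 m : (0 < d)%N -> 0 < chi2_moment R d m.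
Proof. by move=> d0; apply: prodr_gt0 => j _; rewrite ltr0n addn_gt0 d0. Qed.

Lemma frame_const_double m :
  frame_const R d m.*2 = oddfact R m / chi2_moment R d m.
Proof. by rewrite /frame_const doubleK. Qed.

Lemma measurable_monomial (s : seq I) : measurable_fun setT (monomial s : d.-tuple R -> R).
Proof.
elim: s => [|a s IH]; rewrite /monomial.
  by under eq_fun do rewrite big_nil; exact: measurable_cst.
under eq_fun do rewrite big_cons.
by apply: measurable_realfun.measurable_funM => //; exact: measurable_tnth.
Qed.

Lemma norm_tnth_le_enorm (x : d.-tuple R) l : `|tnth x l| <= enorm x.
Proof.
rewrite /enorm -sqrtr_sqr; apply: ler_wsqrtr.
rewrite /dotp (bigD1 l) //= expr2 lerDl; apply: sumr_ge0 => k _.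
by rewrite -expr2 sqr_ge0.
Qed.

Lemma norm_monomial_le (s : seq I) (x : d.-tuple R) :
  `|monomial s x| <= enorm x ^+ size s.
Proof.
elim: s => [|a s IH]; rewrite /monomial ?big_nil ?normr1 ?expr0 // big_cons normrM /=.
by rewrite exprS; apply: ler_pM => //; exact: norm_tnth_le_enorm.
Qed.

End EuclideanMonomials.

Lemma tight_prob_pframe_homogeneous (R : realType) (d p : nat)
    (mu : probability (d.-tuple R) R) (c : R) :
  (0 < d)%N -> prob_pframe p mu ->
  (forall y, frame_int p mu y = (c * enorm y ^+ p)%:E) -> tight_prob_pframe p mu.
Proof.
move=> d0 [A [B [A0 [_ AB]]]] Fc; exists c; split => //.
pose y1 := nseq_tuple d (1 : R).
have y1_gt0 : 0 < enorm y1 ^+ p.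
  rewrite exprn_gt0 // sqrtr_gt0 /dotp (eq_bigr (fun _ => 1)) => [|l _].
    by rewrite sumr_const card_ord ltr0n.
  by rewrite tnth_nseq mulr1.
have := (AB y1).1; rewrite Fc lee_fin ler_pM2r // => Ac.
exact: lt_le_trans Ac.
Qed.

Section MomentTensor.
Variables (R : realType) (d m : nat) (mu : probability (d.-tuple R) R).
Hypothesis mu_moment : finite_pmoment m.*2 mu.
Local Notation I := 'I_d.
Local Notation p := m.*2.
Local Notation W := (@gmoment R d).
Local Notation c0 := (oddfact R m).
Local Notation G := (chi2_moment R d m).

Definition moment_tensor (s : seq I) : R := fine (\int[mu]_x (monomial s x)%:E)%E.
Local Notation T := moment_tensor.

Lemma integrable_monomial (t : p.-tuple I) :
  mu.-integrable setT (fun x => (monomial t x)%:E).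
Proof.
apply: (le_integrable measurableT _ _ mu_moment) => //.
  by apply/measurable_EFinP; exact: measurable_monomial.
move=> x _ /=; rewrite lee_fin [X in _ <= X]ger0_norm; last first.
  by rewrite exprn_ge0 // sqrtr_ge0.
by have := norm_monomial_le t x; rewrite size_tuple.
Qed.

Lemma moment_tensor_perm : perm_invariant T.
Proof.
by move=> s1 s2 H; rewrite /T; under eq_integral do rewrite (monomial_perm _ H).
Qed.

Lemma integral_monomial_comb (S : seq I -> R) :
  (\int[mu]_x (\sum_(t : p.-tuple I) S t * monomial t x)%:E =
   (\sum_(t : p.-tuple I) S t * T t)%:E)%E.
Proof.
under eq_integral do rewrite -sumEFin.
under eq_integral do under eq_bigr do rewrite EFinM.
rewrite integral_sum //; last first.
  by move=> t; apply: (integrableZl measurableT); exact: integrable_monomial.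
rewrite -sumEFin; apply: eq_bigr => t _.
rewrite integralZl //; last exact: integrable_monomial.
by rewrite EFinM /moment_tensor fineK // integrable_fin_num // integrable_monomial.
Qed.

Lemma frame_int_tensor y :
  frame_int p mu y = (\sum_(t : p.-tuple I) T t * monomial t y)%:E.
Proof.
rewrite /frame_int; under eq_integral => x _ do
  rewrite -normrX ger0_norm ?exprn_even_ge0 ?odd_double // dotp_exprn.
under eq_integral => x _ do under eq_bigr => t _ do rewrite mulrC.
rewrite (integral_monomial_comb (fun s => monomial s y)).
by congr EFin; apply: eq_bigr => t _; rewrite mulrC.
Qed.

Lemma PFP_tensor : PFP p mu = (\sum_(t : p.-tuple I) T t * T t)%:E.
Proof.
by rewrite /PFP; under eq_integral do rewrite frame_int_tensor; apply: integral_monomial_comb.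
Qed.

Lemma pmoment_tensor : pmoment p mu = ((\sum_(t : p.-tuple I) W t * T t) / c0)%:E.
Proof.
rewrite /pmoment; under eq_integral => x _ do
  rewrite -[_ ^+ _](mulKf (lt0r_neq0 (oddfact_gt0 R m))) -sum_gmoment_monomial
          mulrC mulr_suml.
under eq_integral do under eq_bigr do rewrite mulrAC.
rewrite (integral_monomial_comb (fun s => W s / c0)) mulr_suml.
by congr EFin; apply: eq_bigr => t _; rewrite mulrAC.
Qed.

Lemma frame_int_proportional (c : R) : (forall t : p.-tuple I, T t = c * W t) ->
  forall y, frame_int p mu y = (c * c0 * enorm y ^+ p)%:E.
Proof.
move=> TW y; rewrite frame_int_tensor.
under eq_bigr => t _ do rewrite TW -mulrA.
by rewrite -mulr_sumr sum_gmoment_monomial mulrA.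
Qed.

Lemma proportional_frame_int (c : R) :
  (forall y, frame_int p mu y = (c * enorm y ^+ p)%:E) ->
  forall t : p.-tuple I, T t = c / c0 * W t.
Proof.
move=> Fc t; apply/eqP; rewrite -subr_eq0; apply/eqP; move: t.
apply: (perm_invariant_coef_eq0 (U := fun s => T s - c / c0 * W s)).
  by move=> s1 s2 H; rewrite (moment_tensor_perm H) (gmoment_perm _ H).
move=> y; have Fy : \sum_(t : p.-tuple I) T t * monomial t y = c * enorm y ^+ p.
  by apply: EFin_inj; rewrite -frame_int_tensor.
under eq_bigr => t _ do rewrite mulrBl -[c / c0 * _ * _]mulrA.
rewrite sumrB -mulr_sumr sum_gmoment_monomial Fy mulrA divfK ?subrr //.
by rewrite lt0r_neq0 ?oddfact_gt0.
Qed.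

Hypothesis d_gt0 : (0 < d)%N.

Let W_norm_gt0 : 0 < \sum_(t : p.-tuple I) W t * W t.
Proof. by rewrite sum_gmoment_sqr mulr_gt0 ?oddfact_gt0 ?chi2_moment_gt0. Qed.

Let const_pmoment_sqr (b : R) : frame_const R d p * (b / c0 * (b / c0)) = b * b / (c0 * G).
Proof.
by rewrite frame_const_double; field; rewrite !lt0r_neq0 ?oddfact_gt0 ?chi2_moment_gt0.
Qed.

Lemma PFP_ge_pmoment_sqr :
  ((frame_const R d p)%:E * (pmoment p mu * pmoment p mu) <= PFP p mu)%E.
Proof.
rewrite PFP_tensor pmoment_tensor -!EFinM lee_fin const_pmoment_sqr.
rewrite ler_pdivrMr -sum_gmoment_sqr // [X in _ <= X]mulrC.
exact: cauchy_schwarz_sum.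
Qed.

Lemma PFP_eq_proportional :
  PFP p mu = ((frame_const R d p)%:E * (pmoment p mu * pmoment p mu))%E ->
  exists c, forall t : p.-tuple I, T t = c * W t.
Proof.
rewrite PFP_tensor pmoment_tensor -!EFinM const_pmoment_sqr -sum_gmoment_sqr.
move=> PFP_eq; have {}PFP_eq := EFin_inj PFP_eq.
have TW := @cauchy_schwarz_sum_eq _ _ _ (fun t : p.-tuple I => T t) W_norm_gt0.
by eexists => t; apply: TW; rewrite PFP_eq [RHS]mulrC divfK ?lt0r_neq0.
Qed.

Lemma proportional_PFP_eq (c : R) : (forall t : p.-tuple I, T t = c * W t) ->
  PFP p mu = ((frame_const R d p)%:E * (pmoment p mu * pmoment p mu))%E.
Proof.
move=> TW; rewrite PFP_tensor pmoment_tensor -!EFinM const_pmoment_sqr.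
under eq_bigr do rewrite TW mulrACA.
under [X in _ = (X * X / _)%:E]eq_bigr do rewrite TW mulrCA.
rewrite -!mulr_sumr sum_gmoment_sqr; congr EFin.
by field; rewrite !lt0r_neq0 ?oddfact_gt0 ?chi2_moment_gt0.
Qed.

End MomentTensor.

Theorem mainTheorem14 (R : realType) (d p : nat) (mu : probability (d.-tuple R) R) :
  (0 < d)%N -> (2 <= p)%N -> ~~ odd p ->
  finite_pmoment p mu -> prob_pframe p mu ->
  ((frame_const R d p)%:E * (pmoment p mu * pmoment p mu) <= PFP p mu)%E /\
  (PFP p mu = (frame_const R d p)%:E * (pmoment p mu * pmoment p mu)
     <-> tight_prob_pframe p mu)%E.
Proof.
move=> d0 _ /negbTE p_even; have [m ->] : exists m, p = m.*2.
  by exists p./2; rewrite -[p in LHS]odd_double_half p_even.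
move=> mu_moment mu_frame; split; first exact: PFP_ge_pmoment_sqr.
split=> [/(PFP_eq_proportional mu_moment d0) [c TW] | [A [_ FA]]].
  exact: tight_prob_pframe_homogeneous d0 mu_frame (frame_int_proportional mu_moment TW).
exact: (@proportional_PFP_eq R d m mu mu_moment d0 _ (proportional_frame_int mu_moment FA)).
Qed.
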